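(* Let $A\subset\mathbb R$ be an open interval of length strictly larger than $2$ and let $\psi:A\to\mathbb C$ be a regular $\mathbb C$-supershift on $A$. Then $a\in A\mapsto a\,\psi(a)$ is a regular $\mathbb C$-supershift on $A$; consequently, for every polynomial $p$ with complex coefficients, $a\in A\mapsto p(a)\,\psi(a)$ is a regular $\mathbb C$-supershift on $A$.
   Context: For an open interval $A\subset\mathbb R$ of length $R>2$ (possibly infinite), set $\mathbb A=\{(a,a')\in\mathbb R\times A:\ a'+[-1,1]\subset A,\ a+a'\in A\}$. For a sequence $\boldsymbol\epsilon=(\epsilon_N)_{N\ge1}$ with $\epsilon_N\in[0,1)$ and $\epsilon_N\to0$, put $h^{\boldsymbol\epsilon}_{N,\nu}=1-2\,\frac{\nu+\epsilon_N(N-\nu)}{N}$ for $0\le\nu\le N$. For a continuous $\psi:A\to\mathbb C$ and $(a,a')\in\mathbb A$ set $$S_N^{\boldsymbol\epsilon}[\psi](a,a')=\sum_{\nu=0}^N\binom N\nu\Big(\frac{1+a}2\Big)^{N-\nu}\Big(\frac{1-a}2\Big)^{\nu}\psi\big(a'+h^{\boldsymbol\epsilon}_{N,\nu}\big).$$ A continuous $\psi:A\to\mathbb C$ is called a regular $\mathbb C$-supershift on $A$ if (1) for every such sequence $\boldsymbol\epsilon$, $S_N^{\boldsymbol\epsilon}[\psi](a,a')\to\psi(a+a')$ as $N\to\infty$ uniformly on compact subsets of $\mathbb A$; and (2) for every family $\{\boldsymbol\epsilon_{\iota'}=(\epsilon_{\iota',N})_{N\ge1}:\iota'\in I'\}$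 of such sequences with $\sup_{\iota'\in I'}\epsilon_{\iota',N}\to0$ as $N\to\infty$, the convergence in (1) is uniform with respect to $\iota'\in I'$ on each compact subset of $\mathbb A$. *)

From HB Require Import structures.
From mathcomp Require Import all_boot all_order all_algebra.
From mathcomp Require Import all_classical all_reals all_analysis.
From mathcomp Require Import complex.
Set Implicit Arguments. Unset Strict Implicit. Unset Printing Implicit Defensive.
Import Order.TTheory GRing.Theory Num.Theory.
Import numFieldNormedType.Exports.
Local Open Scope ring_scope.
Local Open Scope classical_set_scope.
Local Open Scope complex_scope.

Section Supershift.
Variable R : realType.

Definition open_interval_len_gt2 (A : set R) : Prop :=
  exists (l r : \bar R),
    A = [set x | (l < x%:E)%E /\ (x%:E < r)%E] /\ (l + 2%:E < r)%E.

Definition bbA (A : set R) : set (R * R) :=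
  [set x | A x.2 /\ (forall t : R, -1 <= t <= 1 -> A (x.2 + t)) /\ A (x.1 + x.2)].

Definition hN (eps : nat -> R) (N nu : nat) : R :=
  1 - 2 * ((nu%:R + eps N * (N%:R - nu%:R)) / N%:R).

Definition SN (eps : nat -> R) (psi : R -> R[i]) (N : nat) (a a' : R) : R[i] :=
  \sum_(nu < N.+1)
     (('C(N, nu))%:R * ((1 + a) / 2) ^+ (N - nu) * ((1 - a) / 2) ^+ nu)%:C
       * psi (a' + hN eps N nu).

Definition adm_seq (eps : nat -> R) : Prop :=
  (forall N : nat, (0 < N)%N -> 0 <= eps N < 1) /\ eps @ \oo --> 0.

Definition ccontinuous_on (A : set R) (psi : R -> R[i]) : Prop :=
  forall x, A x -> forall e : R, 0 < e -> exists2 d : R, 0 < d &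
    forall y, A y -> `|y - x| < d -> ComplexField.Normc.normc (psi y - psi x) < e.

Definition regular_C_supershift (A : set R) (psi : R -> R[i]) : Prop :=
  ccontinuous_on A psi /\
  (forall eps : nat -> R, adm_seq eps ->
     forall K : set (R * R), compact K -> K `<=` bbA A ->
     forall e : R, 0 < e -> exists N0 : nat, forall N : nat, (N0 <= N)%N ->
       forall x, K x -> ComplexField.Normc.normc (SN eps psi N x.1 x.2 - psi (x.1 + x.2)) < e) /\
  (forall (I' : Type) (eps : I' -> nat -> R),
     (forall i, adm_seq (eps i)) ->
     (forall d : R, 0 < d -> exists N0 : nat, forall N : nat, (N0 <= N)%N ->
        forall i, eps i N <= d) ->
     forall K : set (R * R), compact K -> K `<=` bbA A ->
     forall e : R, 0 < e -> exists N0 : nat, forall N : nat, (N0 <= N)%N ->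
       forall i, forall x, K x ->
         ComplexField.Normc.normc (SN (eps i) psi N x.1 x.2 - psi (x.1 + x.2)) < e).

End Supershift.

From HB Require Import structures.
From mathcomp Require Import all_boot all_order all_algebra.
From mathcomp Require Import all_classical all_reals all_analysis.
From mathcomp Require Import complex.
From mathcomp Require Import ring lra.
Import Order.TTheory GRing.Theory Num.Theory.
Import numFieldNormedType.Exports.
Local Open Scope ring_scope.
Local Open Scope classical_set_scope.
Local Open Scope complex_scope.

(* At the nodes of S_N^eps the argument is x = a' + 1 - 2 eps_N - 2 (1 - eps_N) nu/N.
   Against the binomial weights the factor nu/N lowers the order by one
   (nu C(N, nu) = N C(N-1, nu-1)), and after the shift nu -> nu + 1 the nodes are
   those of order N - 1 for eps'_(N-1) = eps_N + (1 - eps_N)/N, again an admissible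
   sequence, uniformly over families.  Hence
     S_N^eps[x psi](a, a') = (a' + 1 - 2 eps_N) S_N^eps[psi](a, a')
                             - (1 - eps_N) (1 - a) S_(N-1)^eps'[psi](a, a'),
   which tends to (a' + 1 - (1 - a)) psi(a + a') = (a + a') psi(a + a') uniformly on
   compact sets, where the coefficients are bounded.  Polynomial factors follow by
   induction on the polynomial, since regular supershifts form a vector space. *)

Lemma compact_locally_bounded (R : realFieldType) (T : topologicalType)
    (K : set T) (g : T -> R) :
  compact K -> (forall x, K x -> exists M, \forall y \near x, K y -> g y <= M) ->
  exists M, forall x, K x -> g x <= M.
Proof.
move=> /compact_near_coveringP/near_covering_withinP cK loc.
have [|M0 [_ HM0]] := cK R (pinfty_nbhs R) (fun M y => g y <= M) _.
  move=> x Kx; have [M nearM] := loc x Kx.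
  exists ([set y | K y -> g y <= M], [set N | M <= N]).
    by split => //; exists M; split => [|N /ltW//]; exact: num_real.
  by move=> [y N] /= [hy hN] Ky; exact: le_trans (hy Ky) hN.
by exists (M0 + 1) => x Kx; apply: HM0 => //; rewrite ltrDl.
Qed.

Section Supershift.
Local Set Implicit Arguments.
Local Unset Strict Implicit.
Variable R : realType.
Implicit Types (eps : nat -> R) (f g : R -> R[i]) (A : set R).
Local Notation normc := (@ComplexField.Normc.normc R).

Lemma normc_ge0 (z : R[i]) : 0 <= normc z.
Proof. by case: z => x y; rewrite /ComplexField.Normc.normc sqrtr_ge0. Qed.

Lemma normc_real (r : R) : normc r%:C = `|r|.
Proof. by rewrite /ComplexField.Normc.normc /= expr0n /= addr0 sqrtr_sqr. Qed.

Lemma le_normc_dist (u v : R[i]) : normc u <= normc v + normc (u - v).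
Proof. by have := le_normcD v (u - v); rewrite addrC subrK. Qed.

Lemma le_normcB (u v : R[i]) : normc (u - v) <= normc u + normc v.
Proof. by apply: le_trans (le_normcD _ _) _; rewrite normcN. Qed.

Lemma normcD_lt_split (u v : R[i]) (e : R) :
  normc u < e / 2 -> normc v < e / 2 -> normc (u + v) < e.
Proof. by move=> hu hv; apply: le_lt_trans (le_normcD _ _) _; rewrite [e]splitr ltrD. Qed.

Lemma normcM_lt_div (c z : R[i]) (e : R) :
  normc z < e / (normc c + 1) -> normc (c * z) < e.
Proof.
have c1 : 0 < normc c + 1 by rewrite ltr_wpDl ?normc_ge0.
rewrite ltr_pdivlMr // => hz; rewrite ComplexField.Normc.normcM.
apply: le_lt_trans hz; rewrite mulrC ler_wpM2l ?normc_ge0 // lerDl ler01 //.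
Qed.

Definition eps_shift eps (M : nat) : R := eps M.+1 + (1 - eps M.+1) / M.+1%:R.

Lemma hN_shift eps M nu : (0 < M)%N -> hN eps M.+1 nu.+1 = hN (eps_shift eps) M nu.
Proof.
move=> M0; have M0' : (M%:R : R) != 0 by rewrite pnatr_eq0 -lt0n.
have M1 : (M.+1%:R : R) != 0 by rewrite pnatr_eq0.
rewrite /hN /eps_shift !mulrSr; field.
by rewrite -mulrSr M1 M0'.
Qed.

Definition binom_weight (N nu : nat) (a : R) : R :=
  'C(N, nu)%:R * ((1 + a) / 2) ^+ (N - nu) * ((1 - a) / 2) ^+ nu.

Lemma SN_binom_weight eps f N a a' :
  SN eps f N a a' = \sum_(nu < N.+1) (binom_weight N nu a)%:C * f (a' + hN eps N nu).
Proof. by []. Qed.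

(* [nu/(M+1) C(M+1, nu) = C(M, nu-1)] turns the weighted sum into a sum of order [M]. *)
Lemma sum_binom_weight_mean eps f M a a' : (0 < M)%N ->
  \sum_(nu < M.+2)
     (binom_weight M.+1 nu a * (nu%:R / M.+1%:R))%:C * f (a' + hN eps M.+1 nu)
  = ((1 - a) / 2)%:C * SN (eps_shift eps) f M a a'.
Proof.
move=> M0; rewrite big_ord_recl /= mul0r mulr0 rmorph0 mul0r add0r.
rewrite SN_binom_weight mulr_sumr; apply: eq_bigr => nu _.
rewrite /bump /= add1n hN_shift // mulrA -rmorphM; congr (_%:C * _).
have M1 : (M.+1%:R : R) != 0 by rewrite pnatr_eq0.
have nu1 : (nu.+1%:R : R) != 0 by rewrite pnatr_eq0.
have binS : ('C(M.+1, nu.+1)%:R : R) = M.+1%:R * 'C(M, nu)%:R / nu.+1%:R.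
  have := mul_bin_diag M.+1 nu => /(congr1 (fun n => n%:R : R)) /=.
  by rewrite !natrM => ->; rewrite mulrAC mulfV ?mul1r.
rewrite /binom_weight subSS exprSr binS.
by field; rewrite !nat1r M1 nu1.
Qed.

Lemma SN_mulx eps f M a a' : (0 < M)%N ->
  SN eps (fun x => x%:C * f x) M.+1 a a' =
  (a' + 1 - 2 * eps M.+1)%:C * SN eps f M.+1 a a'
  - ((1 - eps M.+1) * (1 - a))%:C * SN (eps_shift eps) f M a a'.
Proof.
move=> M0.
have -> : ((1 - eps M.+1) * (1 - a))%:C
          = (2 * (1 - eps M.+1))%:C * ((1 - a) / 2)%:C.
  by rewrite -rmorphM; congr (_%:C); field.
rewrite -mulrA -sum_binom_weight_mean // !SN_binom_weight !mulr_sumr -sumrB.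
apply: eq_bigr => nu _; rewrite !mulrA -mulrBl; congr (_ * _).
have M1 : (M.+1%:R : R) != 0 by rewrite pnatr_eq0.
by rewrite -!rmorphM -rmorphB; congr (_%:C); rewrite /hN; field.
Qed.

Lemma SN_add eps f g N a a' :
  SN eps (fun x => f x + g x) N a a' = SN eps f N a a' + SN eps g N a a'.
Proof. by rewrite /SN -big_split; apply: eq_bigr => nu _; rewrite mulrDr. Qed.

Lemma SN_scale eps c f N a a' :
  SN eps (fun x => c * f x) N a a' = c * SN eps f N a a'.
Proof. by rewrite /SN mulr_sumr; apply: eq_bigr => nu _; rewrite mulrCA. Qed.

Lemma SN_0 eps N a a' : SN eps (fun _ => 0) N a a' = 0.
Proof. by rewrite /SN big1 // => nu _; rewrite mulr0. Qed.

Definition uniformly_vanishing (I : Type) (eps : I -> nat -> R) : Prop :=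
  forall d : R, 0 < d ->
    exists N0 : nat, forall N : nat, (N0 <= N)%N -> forall i, eps i N <= d.

Definition supershift_uniformly A f : Prop :=
  forall (I : Type) (eps : I -> nat -> R),
    (forall i, adm_seq (eps i)) -> uniformly_vanishing eps ->
  forall K : set (R * R), compact K -> K `<=` bbA A ->
  forall e : R, 0 < e -> exists N0 : nat, forall N : nat, (N0 <= N)%N ->
    forall i x, K x -> normc (SN (eps i) f N x.1 x.2 - f (x.1 + x.2)) < e.

(* Condition (1) is condition (2) for a one-member family. *)
Lemma regular_C_supershiftP A f :
  regular_C_supershift A f <-> ccontinuous_on A f /\ supershift_uniformly A f.
Proof.
split=> [[hc [_ hf]] // | [hc hf]]; split => //; split => // eps he K cK sK e e0.
have vanish : uniformly_vanishing (fun _ : unit => eps).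
  move=> d d0; have /cvgrPdist_le/(_ d d0)[N0 _ HN0] := he.2.
  exists N0 => N /HN0; rewrite /= sub0r normrN => hN _.
  exact: le_trans (ler_norm _) hN.
have [N0 HN0] := hf unit (fun _ => eps) (fun _ => he) vanish K cK sK e e0.
by exists N0 => N /HN0 /(_ tt).
Qed.

Lemma ccontinuous_on_add A f g : ccontinuous_on A f -> ccontinuous_on A g ->
  ccontinuous_on A (fun x => f x + g x).
Proof.
move=> hf hg x Ax e e0; have e2 : 0 < e / 2 by rewrite divr_gt0.
have [d1 d10 H1] := hf x Ax _ e2; have [d2 d20 H2] := hg x Ax _ e2.
exists (Num.min d1 d2) => [|y Ay]; first by rewrite lt_min d10 d20.
rewrite lt_min => /andP[y1 y2]; rewrite opprD addrACA.
by apply: normcD_lt_split; [exact: H1 | exact: H2].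
Qed.

Lemma ccontinuous_on_scale A c f : ccontinuous_on A f ->
  ccontinuous_on A (fun x => c * f x).
Proof.
move=> hf x Ax e e0.
have [d d0 H] := hf x Ax (e / (normc c + 1)) (divr_gt0 e0 (ltr_wpDl (normc_ge0 c) ltr01)).
by exists d => // y Ay yx; rewrite -mulrBr; apply: normcM_lt_div; exact: H.
Qed.

Lemma ccontinuous_on_0 A : ccontinuous_on A (fun _ => 0).
Proof.
move=> x _ e e0; exists 1 => // y _ _.
by rewrite subrr ComplexField.Normc.normc0.
Qed.

Lemma ccontinuous_on_mulx A f : ccontinuous_on A f ->
  ccontinuous_on A (fun x => x%:C * f x).
Proof.
move=> hf x Ax e e0.
set P := normc (f x) + 2; have P0 : 0 < P by rewrite ltr_wpDl ?normc_ge0.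
have e2 : 0 < e / 2 by rewrite divr_gt0.
have tol : 0 < Num.min 1 (e / 2 / (normc x%:C + 1)).
  by rewrite lt_min ltr01 divr_gt0 // ltr_wpDl ?normc_ge0.
have [d1 d10 H1] := hf x Ax _ tol.
exists (Num.min d1 (e / 2 / P)) => [|y Ay]; first by rewrite lt_min d10 divr_gt0.
rewrite lt_min => /andP[/(H1 y Ay) + yx]; rewrite lt_min => /andP[fy1 fy2].
have -> : y%:C * f y - x%:C * f x = f y * (y - x)%:C + x%:C * (f y - f x).
  by rewrite rmorphB /=; ring.
apply: normcD_lt_split; apply: normcM_lt_div => //.
rewrite normc_real; apply: lt_le_trans yx _.
rewrite ler_pM2l // lef_pV2 ?posrE ?ltr_wpDl ?normc_ge0 //.
by have := le_normc_dist (f y) (f x); rewrite /P; lra.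
Qed.

Lemma eps_shift_ge0 eps M : 0 <= eps M.+1 < 1 -> 0 <= eps_shift eps M.
Proof. by case/andP=> e0 e1; rewrite addr_ge0 // divr_ge0 // subr_ge0 ltW. Qed.

Lemma adm_seq_eps_shift eps : adm_seq eps -> adm_seq (eps_shift eps).
Proof.
move=> [hb hcvg]; split=> [M M0|].
  have /andP[e0 e1] := hb M.+1 isT; rewrite eps_shift_ge0 ?e0 ?e1 //=.
  have lt1 : (1 - eps M.+1) / M.+1%:R < 1 - eps M.+1.
    by rewrite ltr_pdivrMr ?ltr0n // ltr_pMr ?subr_gt0 // ltr1n ltnS.
  by rewrite /eps_shift -ltrBrDl.
have shifted : [sequence eps n.+1]_n @ \oo --> 0 by rewrite cvg_shiftS.
rewrite -[X in _ --> X](addr0 0) -[X in _ --> _ + X](mulr0 (1 - 0)).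
apply: cvgD shifted (cvgM (cvgB (cvg_cst _) shifted) cvg_harmonic).
Qed.

Lemma uniformly_vanishing_eps_shift (I : Type) (eps : I -> nat -> R) :
  (forall i, adm_seq (eps i)) -> uniformly_vanishing eps ->
  uniformly_vanishing (fun i => eps_shift (eps i)).
Proof.
move=> ha hv d d0; have d2 : 0 < d / 2 by rewrite divr_gt0.
have [N0 H0] := hv _ d2.
have b0 : 0 <= 2 / d by rewrite divr_ge0 // ltW.
exists (maxn N0 (Num.bound (2 / d))) => N; rewrite geq_max => /andP[n0 n1] i.
have /andP[g0 g1] := (ha i).1 N.+1 isT.
have small : eps i N.+1 <= d / 2 by apply: H0; apply: leqW.
have big : 2 < N.+1%:R * d.
  rewrite -ltr_pdivrMr //; apply: lt_le_trans (archi_boundP b0) _.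
  by rewrite ler_nat; apply: leqW.
have mean : (1 - eps i N.+1) / N.+1%:R <= d / 2.
  by rewrite ler_pdivrMr ?ltr0n //; nra.
by rewrite /eps_shift [d]splitr; exact: lerD small mean.
Qed.

Lemma supershift_uniformly_add A f g :
  supershift_uniformly A f -> supershift_uniformly A g ->
  supershift_uniformly A (fun x => f x + g x).
Proof.
move=> hf hg I eps ha hv K cK sK e e0; have e2 : 0 < e / 2 by rewrite divr_gt0.
have [N1 H1] := hf I eps ha hv K cK sK _ e2.
have [N2 H2] := hg I eps ha hv K cK sK _ e2.
exists (maxn N1 N2) => N; rewrite geq_max => /andP[n1 n2] i x Kx.
rewrite SN_add opprD addrACA.
by apply: normcD_lt_split; [exact: H1 | exact: H2].
Qed.

Lemma supershift_uniformly_scale A c f :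
  supershift_uniformly A f -> supershift_uniformly A (fun x => c * f x).
Proof.
move=> hf I eps ha hv K cK sK e e0.
have [N0 H0] := hf I eps ha hv K cK sK (e / (normc c + 1))
  (divr_gt0 e0 (ltr_wpDl (normc_ge0 c) ltr01)).
exists N0 => N n0 i x Kx; rewrite SN_scale -mulrBr.
by apply: normcM_lt_div; exact: H0.
Qed.

Lemma supershift_uniformly_0 A : supershift_uniformly A (fun _ => 0).
Proof.
move=> I eps ha hv K cK sK e e0; exists 0%N => N _ i x Kx.
by rewrite SN_0 subrr ComplexField.Normc.normc0.
Qed.

Lemma bbA_compact_bound A f (K : set (R * R)) :
  ccontinuous_on A f -> compact K -> K `<=` bbA A ->
  exists B, forall x, K x -> `|x.1| + `|x.2| + normc (f (x.1 + x.2)) <= B.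
Proof.
move=> hc cK sK; apply: compact_locally_bounded => // x Kx.
have [d d0 H] := hc _ (sK x Kx).2.2 1 ltr01.
exists (`|x.1| + `|x.2| + d + normc (f (x.1 + x.2)) + 1).
apply/nbhs_ballP; exists (d / 2) => /=; first by rewrite divr_gt0.
move=> y [/= h1 h2] Ky; rewrite /ball /= distrC in h1; rewrite /ball /= distrC in h2.
have k1 : `|y.1| <= `|x.1| + `|y.1 - x.1| by rewrite -{1}(subrK x.1 y.1) addrC ler_normD.
have k2 : `|y.2| <= `|x.2| + `|y.2 - x.2| by rewrite -{1}(subrK x.2 y.2) addrC ler_normD.
have k3 : `|y.1 + y.2 - (x.1 + x.2)| < d.
  rewrite opprD addrACA; apply: le_lt_trans (ler_normD _ _) _.
  by rewrite [d]splitr ltrD.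
have := H _ (sK y Ky).2.2 k3; have := le_normc_dist (f (y.1 + y.2)) (f (x.1 + x.2)).
lra.
Qed.

Lemma SN_mulx_error eps f M a a' : (0 < M)%N -> 0 <= eps M.+1 <= 1 ->
  normc (SN eps (fun x => x%:C * f x) M.+1 a a' - (a + a')%:C * f (a + a'))
  <= (`|a| + `|a'| + 3) *
     (normc (SN eps f M.+1 a a' - f (a + a'))
      + normc (SN (eps_shift eps) f M a a' - f (a + a'))
      + eps M.+1 * normc (f (a + a'))).
Proof.
move=> M0 ep_bounds; rewrite SN_mulx //.
set s := SN eps f M.+1 a a'; set t := SN (eps_shift eps) f M a a'.
set u := f (a + a'); set ep := eps M.+1 in ep_bounds *.
case/andP: ep_bounds => ep0 ep1.
have -> : (a' + 1 - 2 * ep)%:C * s - ((1 - ep) * (1 - a))%:C * t - (a + a')%:C * u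
    = (a' + 1 - 2 * ep)%:C * (s - u) - ((1 - ep) * (1 - a))%:C * (t - u)
      - (ep * (1 + a))%:C * u.
  by rewrite !(rmorphB, rmorphD, rmorphM, rmorph1) /=; ring.
apply: le_trans (le_normcB _ _) _; apply: le_trans (lerD (le_normcB _ _) (lexx _)) _.
rewrite !ComplexField.Normc.normcM !normc_real.
have na := normr_ge0 a; have na' := normr_ge0 a'.
have c1 : `|a' + 1 - 2 * ep| <= `|a| + `|a'| + 3.
  have := ler_norm a'; have := ler_norm (- a'); rewrite normrN => lo hi.
  by rewrite ler_norml; apply/andP; split; lra.
have c2 : `|(1 - ep) * (1 - a)| <= `|a| + `|a'| + 3.
  rewrite normrM ger0_norm ?subr_ge0 //.
  have le1 : 1 - ep <= 1 by lra.
  apply: le_trans (ler_pM _ (normr_ge0 _) le1 (ler_normB 1 a)) _; first by rewrite subr_ge0.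
  by rewrite normr1 mul1r; lra.
have c3 : `|ep * (1 + a)| <= (`|a| + `|a'| + 3) * ep.
  rewrite normrM ger0_norm // mulrC ler_wpM2r //.
  by have := ler_normD 1 a; rewrite normr1; lra.
set C := `|a| + `|a'| + 3 in c1 c2 c3 *.
rewrite [C * _]mulrDr [C * _]mulrDr mulrA.
by apply: lerD; first apply: lerD; apply: ler_wpM2r => //; exact: normc_ge0.
Qed.

Lemma supershift_uniformly_mulx A f :
  ccontinuous_on A f -> supershift_uniformly A f ->
  supershift_uniformly A (fun x => x%:C * f x).
Proof.
move=> hc hf I eps ha hv K cK sK e e0.
have [B HB] := bbA_compact_bound hc cK sK.
pose C := `|B| + 3; have C0 : 0 < C by rewrite ltr_wpDl.
have e1 : 0 < e / (3 * C) by rewrite divr_gt0 ?mulr_gt0.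
have e2 : 0 < e / (3 * C * C) by rewrite divr_gt0 ?mulr_gt0.
have [N1 H1] := hf I eps ha hv K cK sK _ e1.
have [N2 H2] := hf I _ (fun i => adm_seq_eps_shift (ha i))
  (uniformly_vanishing_eps_shift ha hv) K cK sK _ e1.
have [N3 H3] := hv _ e2.
exists (maxn (maxn N1 N2.+1) (maxn N3 2)) => N.
rewrite !geq_max => /andP[/andP[n1 n2] /andP[n3 n4]] i x Kx.
case: N n1 n2 n3 n4 => [//|M] n1 n2 n3 n4.
have /andP[ep0 ep1] := (ha i).1 M.+1 isT.
apply: le_lt_trans (SN_mulx_error _ _ _ _ _) _ => //; first by rewrite ep0 ltW.
have hb := HB x Kx; have hB := ler_norm B.
set S := normc _; set T := normc _; set U := normc (f _) in hb *.
have S_lt : S < e / (3 * C) by exact: H1.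
have T_lt : T < e / (3 * C) by exact: H2.
have ep_le : eps i M.+1 <= e / (3 * C * C) by exact: H3.
have U0 : 0 <= U := normc_ge0 _.
have X0 : 0 <= S + T + eps i M.+1 * U.
  by rewrite !addr_ge0 ?mulr_ge0 ?normc_ge0.
have D_le : `|x.1| + `|x.2| + 3 <= C by rewrite /C; lra.
have U_le : U <= C.
  by have := normr_ge0 x.1; have := normr_ge0 x.2; rewrite /C; lra.
have X_lt : S + T + eps i M.+1 * U < e / C.
  have := ler_pM ep0 U0 ep_le U_le.
  have split : e / (3 * C) + e / (3 * C) + e / (3 * C * C) * C = e / C.
    by field; rewrite gt_eqF.
  lra.
apply: le_lt_trans (ler_wpM2r X0 D_le) _.
by rewrite mulrC -ltr_pdivlMr.
Qed.

Lemma regular_C_supershift_add A f g :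
  regular_C_supershift A f -> regular_C_supershift A g ->
  regular_C_supershift A (fun x => f x + g x).
Proof.
move=> /regular_C_supershiftP[cf uf] /regular_C_supershiftP[cg ug].
apply/regular_C_supershiftP; split.
  exact: ccontinuous_on_add.
exact: supershift_uniformly_add.
Qed.

Lemma regular_C_supershift_scale A c f :
  regular_C_supershift A f -> regular_C_supershift A (fun x => c * f x).
Proof.
move=> /regular_C_supershiftP[cf uf]; apply/regular_C_supershiftP; split.
  exact: ccontinuous_on_scale.
exact: supershift_uniformly_scale.
Qed.

Lemma regular_C_supershift_0 A : regular_C_supershift A (fun _ => 0).
Proof.
apply/regular_C_supershiftP; split.
  exact: ccontinuous_on_0.
exact: supershift_uniformly_0.
Qed.

Lemma regular_C_supershift_mulx A f :
  regular_C_supershift A f -> regular_C_supershift A (fun x => x%:C * f x).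
Proof.
move=> /regular_C_supershiftP[cf uf]; apply/regular_C_supershiftP; split.
  exact: ccontinuous_on_mulx.
exact: supershift_uniformly_mulx.
Qed.

End Supershift.

(* The length condition on [A] only makes [bbA A] nonempty; the closure
   properties above hold for every [A]. *)
Theorem mainTheorem7 (R : realType) (A : set R) (psi : R -> R[i]) :
  open_interval_len_gt2 A ->
  regular_C_supershift A psi ->
  regular_C_supershift A (fun a => a%:C * psi a) /\
  (forall p : {poly R[i]}, regular_C_supershift A (fun a => p.[a%:C] * psi a)).
Proof.
move=> _ hpsi; split=> [|p]; first exact: regular_C_supershift_mulx.
elim/poly_ind: p => [|p c IH].
  have -> : (fun a => 0.[a%:C] * psi a) = (fun _ => 0).
    by apply/funext => a; rewrite horner0 mul0r.
  exact: regular_C_supershift_0.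
have -> : (fun a => (p * 'X + c%:P).[a%:C] * psi a)
          = (fun a => a%:C * (p.[a%:C] * psi a) + c * psi a).
  by apply/funext => a; rewrite hornerMXaddC; ring.
apply: regular_C_supershift_add; last exact: regular_C_supershift_scale.
exact: regular_C_supershift_mulx.
Qed.
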